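(* Let $p\ge1$, let $(X,d_X),(Y,d_Y),(Z,d_Z)$ be pseudo-metric spaces, and let $(W,\mu)$, $(V,\gamma)$ be probability spaces. Let $f(x;w):X\times W\to Y$ be $\alpha$ lower-Hölder in expectation and $g(y;v):Y\times V\to Z$ be $\beta$ lower-Hölder in expectation, with $\alpha,\beta\ge1$. Then $(g\circ f)(x;w,v)=g(f(x;w);v)$, with $(w,v)$ distributed according to the product measure $\mu\times\gamma$, is $\alpha\beta$ lower-Hölder in expectation. Moreover, if $f$ and $g$ are uniformly Lipschitz, then so is $g\circ f$.
   Context: A parametric function $f(x;w)$ (measurable in $w$ for each fixed $x$) with a probability measure on parameters is $\alpha$ lower-Hölder in expectation if there is $c>0$ such that $c^p\le \mathbb{E}_{w}\left[\left(\frac{d_Y(f(x;w),f(x';w))}{d_X(x,x')^\alpha}\right)^p\right]$ for all $x,x'$ with $d_X(x,x')>0$. It is uniformly Lipschitz if there is $L>0$ such that $x\mapsto f(x;w)$ is $L$-Lipschitz for every parameter $w$. *)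

From HB Require Import structures.
From mathcomp Require Import all_boot all_order all_algebra.
From mathcomp Require Import all_classical all_reals all_analysis.
Set Implicit Arguments. Unset Strict Implicit. Unset Printing Implicit Defensive.
Import Order.TTheory GRing.Theory Num.Theory.
Local Open Scope ring_scope.

Record pseudo_metric (R : realType) (T : Type) := PseudoMetric {
  pm_dist :> T -> T -> R;
  pm_ge0 : forall x y, 0 <= pm_dist x y;
  pm_refl : forall x, pm_dist x x = 0;
  pm_sym : forall x y, pm_dist x y = pm_dist y x;
  pm_triangle : forall x y z, pm_dist x z <= pm_dist x y + pm_dist y z }.

Definition lower_holder_exp (R : realType) (X Y : Type)
    (dX : pseudo_metric R X) (dY : pseudo_metric R Y)
    (dW : measure_display) (W : measurableType dW) (P : probability W R)
    (f : X -> W -> Y) (alpha p : R) : Prop :=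
  exists2 c : R, 0 < c &
    forall x x' : X, 0 < dX x x' ->
      ((c `^ p)%:E <=
        \int[P]_w (((dY (f x w) (f x' w)) / (dX x x') `^ alpha) `^ p)%:E)%E.

Definition uniformly_lipschitz (R : realType) (X Y W : Type)
    (dX : pseudo_metric R X) (dY : pseudo_metric R Y) (f : X -> W -> Y) : Prop :=
  exists2 L : R, 0 < L &
    forall (w : W) (x x' : X), dY (f x w) (f x' w) <= L * dX x x'.

Definition comp_param (X Y Z W V : Type) (f : X -> W -> Y) (g : Y -> V -> Z)
  : X -> W * V -> Z := fun x wv => g (f x wv.1) wv.2.

From HB Require Import structures.
From mathcomp Require Import all_boot all_order all_algebra.
From mathcomp Require Import all_classical all_reals all_analysis.
From mathcomp Require Import ring lra.
Import measurable_realfun.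
Import Order.TTheory GRing.Theory Num.Theory.
Local Open Scope ring_scope.

(* Idea: the tangent-line inequality for [t |-> t ^ beta] at [E h] gives the
   Jensen bound [(E h) ^ beta <= E (h ^ beta)].  For fixed [w], factoring
   [d_Y(f(x;w), f(x';w)) ^ beta] out of the ratio defining the composite
   and using the lower bound for [g] bounds the inner [v]-integral below by
   [c_g ^ p * h(w) ^ beta], where [h(w)] is the ratio of [f]; Tonelli and
   Jensen applied to [h] then give the constant [c_g * c_f ^ beta]. *)

Section powR_lemmas.
Context {R : realType}.
Implicit Types a b d r t y z : R.

Lemma powRV a r : 0 <= a -> a^-1 `^ r = (a `^ r)^-1.
Proof.
by move=> a0; rewrite -powR_inv1 // -powRrM mulrC powRrM powR_inv1 ?powR_ge0.
Qed.

Lemma powR_div a b r : 0 <= a -> 0 <= b -> (a / b) `^ r = a `^ r / b `^ r.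
Proof. by move=> a0 b0; rewrite powRM ?invr_ge0 // powRV. Qed.

(* Young's inequality with exponents [b] and [b / (b - 1)]. *)
Lemma powR_tangent_le b t h : 1 <= b -> 0 < t -> 0 <= h ->
  b * t `^ (b - 1) * h <= h `^ b + (b - 1) * t `^ b.
Proof.
move=> b1 t0 h0; have [->|bN1] := eqVneq b 1.
  by rewrite subrr powRr0 powRr1 // !mul1r mul0r addr0.
have bB1_gt0 : 0 < b - 1 by rewrite subr_gt0 lt_neqAle eq_sym bN1.
have b0 : 0 < b by rewrite (lt_le_trans ltr01).
have q0 : 0 < b / (b - 1) by rewrite divr_gt0.
have conj : b^-1 + (b / (b - 1))^-1 = 1.
  by rewrite invf_div; field; rewrite gt_eqF.
have := conjugate_powR h0 (powR_ge0 t (b - 1)) b0 q0 conj.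
rewrite -powRrM mulrCA divff ?gt_eqF // mulr1 => young.
have := ler_wpM2l (ltW b0) young.
set A := h `^ b; set B := t `^ b; set C := t `^ (b - 1).
have -> : b * (A / b + B / (b / (b - 1))) = A + (b - 1) * B.
  by field; rewrite !gt_eqF.
by have -> : b * (h * C) = b * C * h by ring.
Qed.

Lemma powR_ratio_split p beta d y z : 0 < d -> 0 < y -> 0 <= z ->
  (z / d `^ beta) `^ p = ((y / d) `^ p) `^ beta * (z / y `^ beta) `^ p.
Proof.
move=> d0 y0 z0.
rewrite powRAC -powRM ?divr_ge0 ?powR_ge0 //; congr (_ `^ p).
by rewrite powR_div ?ltW //; field; rewrite !gt_eqF ?powR_gt0.
Qed.

End powR_lemmas.

Section integral_bounds.
Local Open Scope ereal_scope.
Context {R : realType} {d : measure_display} {T : measurableType d}.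

Lemma integral_powR_lb (P : probability T R) (h : T -> R) (b t : R) :
  (1 <= b)%R -> (0 < t)%R -> measurable_fun setT h -> (forall x, (0 <= h x)%R) ->
  t%:E <= \int[P]_x (h x)%:E -> (t `^ b)%:E <= \int[P]_x (h x `^ b)%:E.
Proof.
move=> b1 t0 mh h0 Eh.
have mhb : measurable_fun setT (fun x => (h x `^ b)%R).
  exact: measurableT_comp (measurable_powR _) mh.
have k0 : (0 <= b * t `^ (b - 1))%R by rewrite mulr_ge0 ?powR_ge0 ?(le_trans ler01).
have c0 : (0 <= (b - 1) * t `^ b)%R by rewrite mulr_ge0 ?powR_ge0 ?subr_ge0.
have tangent : (b * t `^ (b - 1))%:E * \int[P]_x (h x)%:E
    <= \int[P]_x (h x `^ b)%:E + ((b - 1) * t `^ b)%:E.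
  rewrite -ge0_integralZl_EFin //; last 2 first.
  - by move=> x _; rewrite lee_fin.
  - exact/measurable_EFinP.
  have -> : \int[P]_x (h x `^ b)%:E + ((b - 1) * t `^ b)%:E
      = \int[P]_x ((h x `^ b)%:E + ((b - 1) * t `^ b)%:E).
    rewrite ge0_integralD //; try by move=> x _; rewrite lee_fin ?powR_ge0.
      rewrite integral_cst //; congr (_ + _); rewrite -[LHS]mule1.
      by congr (_ * _); apply/esym; exact: probability_setT.
    exact/measurable_EFinP.
  apply: ge0_le_integral => //.
  - by move=> x _; rewrite lee_fin mulr_ge0.
  - by apply: measurable_funeM; exact/measurable_EFinP.
  - by apply: emeasurable_funD => //; exact/measurable_EFinP.
  - by move=> x _; rewrite -EFinM -EFinD lee_fin; exact: powR_tangent_le.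
have := le_trans (lee_wpmul2l (k0 : 0 <= (b * t `^ (b - 1))%:E) Eh) tangent.
have : 0 <= \int[P]_x (h x `^ b)%:E.
  by apply: integral_ge0 => x _; rewrite lee_fin powR_ge0.
case: (\int[P]_x (h x `^ b)%:E) => [r| |] // _; last by move=> _; rewrite leey.
rewrite -EFinM -EFinD !lee_fin -mulrA (mulrC _ t).
rewrite mulr_powRB1 ?(ltW t0) ?(lt_le_trans ltr01 b1) //; lra.
Qed.

(* The case [y = 0] needs [p, beta != 0], so that both sides vanish. *)
Lemma integral_ratio_rescale (mu : {measure set T -> \bar R}) (z : T -> R)
    (y s b p beta : R) :
  (0 < p)%R -> (0 < beta)%R -> (0 < s)%R -> (0 <= y)%R ->
  measurable_fun setT z -> (forall v, (0 <= z v)%R) ->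
  ((0 < y)%R -> b%:E <= \int[mu]_v ((z v / y `^ beta) `^ p)%:E) ->
  (b * ((y / s) `^ p) `^ beta)%:E <= \int[mu]_v ((z v / s `^ beta) `^ p)%:E.
Proof.
move=> p0 beta0 s0; rewrite le_eqVlt => /predU1P[<-|y0] mz z0 Hz.
  rewrite mul0r !powR0 ?gt_eqF // mulr0.
  by apply: integral_ge0 => v _; rewrite lee_fin powR_ge0.
under eq_integral do rewrite (powR_ratio_split p beta _ _ _ s0 y0 (z0 _)) EFinM.
rewrite ge0_integralZl_EFin ?powR_ge0 //; last 2 first.
- by move=> v _; rewrite lee_fin powR_ge0.
- apply/measurable_EFinP; apply: measurableT_comp (measurable_powR _) _.
  by apply: measurable_funM => //; exact: measurable_cst.
by rewrite EFinM muleC lee_wpmul2l ?lee_fin ?powR_ge0 ?Hz.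
Qed.

End integral_bounds.

Lemma uniformly_lipschitz_comp (R : realType) (X Y Z W V : Type)
    (dX : pseudo_metric R X) (dY : pseudo_metric R Y) (dZ : pseudo_metric R Z)
    (f : X -> W -> Y) (g : Y -> V -> Z) :
  uniformly_lipschitz dX dY f -> uniformly_lipschitz dY dZ g ->
  uniformly_lipschitz dX dZ (comp_param f g).
Proof.
move=> [Lf Lf0 HLf] [Lg Lg0 HLg]; exists (Lg * Lf); first exact: mulr_gt0.
move=> [w v] x x'; apply: le_trans (HLg v _ _) _.
by rewrite -mulrA ler_pM2l //; exact: HLf.
Qed.

Lemma lower_holder_exp_comp (R : realType) (p alpha beta : R)
    (X Y Z : Type) (dX : pseudo_metric R X) (dY : pseudo_metric R Y)
    (dZ : pseudo_metric R Z)
    (dW : measure_display) (W : measurableType dW) (mu : probability W R)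
    (dV : measure_display) (V : measurableType dV) (gamma : probability V R)
    (f : X -> W -> Y) (g : Y -> V -> Z) :
  0 < p -> 1 <= beta ->
  (forall x x' : X, measurable_fun setT (fun w => dY (f x w) (f x' w))) ->
  (forall y y' : Y, measurable_fun setT (fun v => dZ (g y v) (g y' v))) ->
  (forall x x' : X, measurable_fun setT
     (fun wv : W * V => dZ (comp_param f g x wv) (comp_param f g x' wv))) ->
  lower_holder_exp dX dY mu f alpha p ->
  lower_holder_exp dY dZ gamma g beta p ->
  lower_holder_exp dX dZ (mu \x gamma)%E (comp_param f g) (alpha * beta) p.
Proof.
move=> p0 b1 mf mg mfg [cf cf0 Hf] [cg cg0 Hg].
have b0 : 0 < beta by rewrite (lt_le_trans ltr01).
exists (cg * cf `^ beta); first by rewrite mulr_gt0 ?powR_gt0.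
move=> x x' dxx; set s := dX x x' `^ alpha.
have s0 : 0 < s by rewrite powR_gt0.
pose h w := (dY (f x w) (f x' w) / s) `^ p.
have mh : measurable_fun setT h.
  apply: measurableT_comp (measurable_powR _) _.
  by apply: measurable_funM => //; exact: measurable_cst.
pose G wv := (dZ (comp_param f g x wv) (comp_param f g x' wv)
  / dX x x' `^ (alpha * beta)) `^ p.
have mG : measurable_fun setT (fun wv => (G wv)%:E).
  apply/measurable_EFinP; apply: measurableT_comp (measurable_powR _) _.
  by apply: measurable_funM => //; exact: measurable_cst.
have G0 wv : (0 <= (G wv)%:E)%E by rewrite lee_fin powR_ge0.
have inner w : ((cg `^ p * h w `^ beta)%:E
    <= fubini_F gamma (fun wv => (G wv)%:E) w)%E.
  rewrite /fubini_F /G /comp_param /= powRrM -/s.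
  apply: integral_ratio_rescale => //; first exact: pm_ge0.
  - by move=> v; exact: pm_ge0.
  - exact: Hg.
have jensen := integral_powR_lb mu h beta (cf `^ p) b1 (powR_gt0 p cf0) mh
  (fun w => powR_ge0 _ _) (Hf x x' dxx).
rewrite (@fubini_tonelli1 _ _ _ _ _ mu gamma _ mG G0).
rewrite powRM ?powR_ge0 ?(ltW cg0) // powRAC EFinM.
apply: le_trans (lee_wpmul2l _ jensen) _; first by rewrite lee_fin powR_ge0.
rewrite -ge0_integralZl_EFin ?powR_ge0 //; last 2 first.
- by move=> w _; rewrite lee_fin powR_ge0.
- by apply/measurable_EFinP; exact: measurableT_comp (measurable_powR _) mh.
apply: ge0_le_integral => //.
- by move=> w _; rewrite -EFinM lee_fin mulr_ge0 ?powR_ge0.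
- apply/measurable_EFinP; apply: measurable_funM; first exact: measurable_cst.
  exact: measurableT_comp (measurable_powR _) mh.
- exact: measurable_fun_fubini_tonelli_F mG G0.
- by move=> w _; rewrite -EFinM; exact: inner.
Qed.

Theorem mainTheorem5 (R : realType) (p alpha beta : R)
    (X Y Z : Type) (dX : pseudo_metric R X) (dY : pseudo_metric R Y)
    (dZ : pseudo_metric R Z)
    (dW : measure_display) (W : measurableType dW) (mu : probability W R)
    (dV : measure_display) (V : measurableType dV) (gamma : probability V R)
    (f : X -> W -> Y) (g : Y -> V -> Z) :
  1 <= p -> 1 <= alpha -> 1 <= beta ->
  (forall x x' : X, measurable_fun setT (fun w => dY (f x w) (f x' w))) ->
  (forall y y' : Y, measurable_fun setT (fun v => dZ (g y v) (g y' v))) ->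
  (forall x x' : X, measurable_fun setT
     (fun wv : W * V => dZ (comp_param f g x wv) (comp_param f g x' wv))) ->
  lower_holder_exp dX dY mu f alpha p ->
  lower_holder_exp dY dZ gamma g beta p ->
  lower_holder_exp dX dZ (mu \x gamma)%E (comp_param f g) (alpha * beta) p /\
  (uniformly_lipschitz dX dY f -> uniformly_lipschitz dY dZ g ->
   uniformly_lipschitz dX dZ (comp_param f g)).
Proof.
move=> p1 _ b1 mf mg mfg Hf Hg; split; last exact: uniformly_lipschitz_comp.
by apply: lower_holder_exp_comp => //; rewrite (lt_le_trans ltr01).
Qed.
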